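(* For a Hausdorff convergence $\xi$ the following are equivalent: (1) $\xi$ is strongly countably $\mathrm{S}_0$-characterized; (2) $\xi\times\tau$ is strongly countably $\mathrm{S}_0$-characterized for every pretopology $\tau$ of countable character; (3) $\xi\times\tau$ has countable $\mathrm{S}_0$-character for every prime metrizable topology $\tau$.
   Context: A convergence $\xi$ on a set $X$ is a relation between filters and points, $x\in\lim_\xi\mathcal{F}$, isotone in $\mathcal{F}$ with $x\in\lim_\xi\{x\}^\uparrow$; $\xi\ge\theta$ means $\lim_\xi\mathcal{F}\subset\lim_\theta\mathcal{F}$ for all $\mathcal{F}$. Hausdorff: each filter has at most one limit. Vicinity filter: intersection of filters converging to $x$; pretopology: $x\in\lim\mathcal{V}_\xi(x)$ for all $x$. $\mathrm{T}\xi$: topology of $\xi$-open sets ($O$ with $\lim_\xi\mathcal{F}\cap O\ne\emptyset\Rightarrow O\in\mathcal{F}$). $x\in\lim_{\mathrm{I}_1\xi}\mathcal{F}$ iff some countably based $\mathcal{H}\le\mathcal{F}$ has $x\in\lim_\xi\mathcal{H}$; countable character: $\xi=\mathrm{I}_1\xi$. The product $\xi\times\tau$: a filter converges to $(x,y)$ iff its projections converge to $x$ and $y$. A point $x$ is isolated if $\{x\}^\uparrow$ is the only filter converging to $x$; a prime convergence has at most one non-isolated point. $\mathrm{Epi}_{\mathrm{I}_1}\xi$ is the coarsest convergence $\theta$ on $|\xi|$ with $\mathrm{T}(\xi\times\tau)=\mathrm{T}(\theta\times\tau)$ for every convergence $\tau$ of countable character; equivalently $\theta\ge\mathrm{Epi}_{\mathrm{I}_1}\xi$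 iff $\theta\times\tau\ge\mathrm{T}(\xi\times\tau)$ for every prime metrizable topology $\tau$. $\xi$ has countable $\mathrm{S}_0$-character if some pretopology $\sigma$ of countable character satisfies $\sigma\ge\xi\ge\mathrm{T}\sigma$; it is strongly countably $\mathrm{S}_0$-characterized if some pretopology $\sigma$ of countable character satisfies $\sigma\ge\xi\ge\mathrm{Epi}_{\mathrm{I}_1}\sigma$. *)

From Stdlib Require Import Reals Classical.
Open Scope R_scope.

Set Implicit Arguments.

Definition set (X : Type) := X -> Prop.

Definition is_filter (X : Type) (F : set X -> Prop) : Prop :=
  F (fun _ => True) /\
  (forall A B : set X, F A -> F B -> F (fun x => A x /\ B x)) /\
  (forall A B : set X, F A -> (forall x, A x -> B x) -> F B) /\
  ~ F (fun _ => False).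

Definition filter_le (X : Type) (F G : set X -> Prop) : Prop :=
  forall A, F A -> G A.

Definition principal (X : Type) (x : X) : set X -> Prop := fun A => A x.

Definition image_filter (X Y : Type) (f : X -> Y) (F : set X -> Prop) : set Y -> Prop :=
  fun B => F (fun x => B (f x)).

Lemma principal_filter (X : Type) (x : X) : is_filter (principal x).
Proof.
  unfold is_filter, principal; repeat split; auto.
Qed.

Lemma image_is_filter (X Y : Type) (f : X -> Y) (F : set X -> Prop) :
  is_filter F -> is_filter (image_filter f F).
Proof.
  unfold is_filter, image_filter; intros [H1 [H2 [H3 H4]]]; repeat split.
  - apply H3 with (fun _ => True); auto.
  - intros A B HA HB; apply (H2 _ _ HA HB).
  - intros A B HA HAB; apply H3 with (1 := HA); auto.
  - exact H4.
Qed.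

Record convergence (X : Type) := Convergence {
  lim : (set X -> Prop) -> X -> Prop;
  lim_isotone : forall F G x, is_filter F -> is_filter G ->
      filter_le F G -> lim F x -> lim G x;
  lim_centered : forall x, lim (principal x) x
}.
Arguments lim {X} c F x.

Definition conv_ge (X : Type) (xi theta : convergence X) : Prop :=
  forall F x, is_filter F -> lim xi F x -> lim theta F x.

Definition conv_eq (X : Type) (xi theta : convergence X) : Prop :=
  conv_ge xi theta /\ conv_ge theta xi.

Definition hausdorff (X : Type) (xi : convergence X) : Prop :=
  forall F x y, is_filter F -> lim xi F x -> lim xi F y -> x = y.

Definition vicinity (X : Type) (xi : convergence X) (x : X) : set X -> Prop :=
  fun A => forall F, is_filter F -> lim xi F x -> F A.

Definition pretopology (X : Type) (xi : convergence X) : Prop :=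
  forall x, lim xi (vicinity xi x) x.

Definition conv_open (X : Type) (xi : convergence X) (O : set X) : Prop :=
  forall F x, is_filter F -> lim xi F x -> O x -> F O.

Definition T_lim (X : Type) (xi : convergence X) (F : set X -> Prop) (x : X) : Prop :=
  forall O, conv_open xi O -> O x -> F O.

Lemma T_isotone (X : Type) (xi : convergence X) : forall F G x, is_filter F -> is_filter G ->
      filter_le F G -> T_lim xi F x -> T_lim xi G x.
Proof. unfold T_lim, filter_le; auto. Qed.

Lemma T_centered (X : Type) (xi : convergence X) : forall x, T_lim xi (principal x) x.
Proof. unfold T_lim, principal; auto. Qed.

Definition T (X : Type) (xi : convergence X) : convergence X :=
  @Convergence _ (T_lim xi) (@T_isotone _ xi) (@T_centered _ xi).

Definition countably_based (X : Type) (H : set X -> Prop) : Prop :=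
  exists B : nat -> set X,
    forall A, H A <-> exists n, forall x, B n x -> A x.

Definition I1_lim (X : Type) (xi : convergence X) (F : set X -> Prop) (x : X) : Prop :=
  exists H, is_filter H /\ countably_based H /\ filter_le H F /\ lim xi H x.

Lemma I1_isotone (X : Type) (xi : convergence X) : forall F G x, is_filter F -> is_filter G ->
      filter_le F G -> I1_lim xi F x -> I1_lim xi G x.
Proof.
  unfold I1_lim, filter_le; intros F G x _ _ HFG [H [H1 [H2 [H3 H4]]]]; exists H; split; [exact H1|split; [exact H2|split; [intros A HA; apply HFG, H3, HA|exact H4]]].
Qed.

Lemma I1_centered (X : Type) (xi : convergence X) : forall x, I1_lim xi (principal x) x.
Proof.
  intro x; exists (principal x); split; [|split; [|split]].
  - apply principal_filter.
  - exists (fun _ y => y = x); unfold principal; intro A; split.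
    + intro Ha; exists 0%nat; intros y ->; exact Ha.
    + intros [_ Hn]; apply Hn; reflexivity.
  - unfold filter_le; auto.
  - apply lim_centered.
Qed.

Definition I1 (X : Type) (xi : convergence X) : convergence X :=
  @Convergence _ (I1_lim xi) (@I1_isotone _ xi) (@I1_centered _ xi).

Definition countable_character (X : Type) (xi : convergence X) : Prop :=
  conv_eq xi (I1 xi).

Definition prod_lim (X Y : Type) (xi : convergence X) (tau : convergence Y)
  (F : set (X * Y) -> Prop) (p : X * Y) : Prop :=
  lim xi (image_filter fst F) (fst p) /\ lim tau (image_filter snd F) (snd p).

Lemma prod_isotone (X Y : Type) (xi : convergence X) (tau : convergence Y) :
  forall F G p, is_filter F -> is_filter G ->
      filter_le F G -> prod_lim xi tau F p -> prod_lim xi tau G p.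
Proof.
  unfold prod_lim; intros F G p HF HG HFG [H1 H2]; split.
  - apply (lim_isotone xi) with (3 := fun A HA => HFG _ HA) (4 := H1);
      apply image_is_filter; auto.
  - apply (lim_isotone tau) with (3 := fun A HA => HFG _ HA) (4 := H2);
      apply image_is_filter; auto.
Qed.

Lemma prod_centered (X Y : Type) (xi : convergence X) (tau : convergence Y) :
  forall p, prod_lim xi tau (principal p) p.
Proof.
  intros [x y]; split; apply lim_centered.
Qed.

Definition prod_conv (X Y : Type) (xi : convergence X) (tau : convergence Y)
  : convergence (X * Y) :=
  @Convergence _ (prod_lim xi tau) (@prod_isotone _ _ xi tau) (@prod_centered _ _ xi tau).

Definition isolated (X : Type) (xi : convergence X) (x : X) : Prop :=
  forall F, is_filter F -> lim xi F x -> forall A, F A <-> principal x A.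

Definition prime (X : Type) (xi : convergence X) : Prop :=
  forall x y, ~ isolated xi x -> ~ isolated xi y -> x = y.

Definition is_metric (Y : Type) (d : Y -> Y -> R) : Prop :=
  (forall x y, 0 <= d x y) /\
  (forall x y, d x y = 0 <-> x = y) /\
  (forall x y, d x y = d y x) /\
  (forall x y z, d x z <= d x y + d y z).

Definition ball (Y : Type) (d : Y -> Y -> R) (x : Y) (eps : R) : set Y :=
  fun y => d x y < eps.

(** tau is a topology (tau = T tau) induced by a metric: this is exactly the
    statement that tau coincides with the metric convergence of some metric. *)
Definition metrizable_topology (Y : Type) (tau : convergence Y) : Prop :=
  exists d : Y -> Y -> R, is_metric d /\
    forall F x, is_filter F ->
      (lim tau F x <-> forall eps, 0 < eps -> F (ball d x eps)).

(** Epi_{I_1} xi : the coarsest convergence theta on |xi| such that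
    T(xi x tau) = T(theta x tau) for every tau of countable character.
    Defined as the infimum (union of limits) of that class, which is its
    coarsest member (xi itself belongs to the class). *)
Definition epi_class (X : Type) (xi theta : convergence X) : Prop :=
  forall (Y : Type) (tau : convergence Y), countable_character tau ->
    conv_eq (T (prod_conv xi tau)) (T (prod_conv theta tau)).

Definition Epi_lim (X : Type) (xi : convergence X) (F : set X -> Prop) (x : X) : Prop :=
  exists theta : convergence X, epi_class xi theta /\ lim theta F x.

Lemma Epi_isotone (X : Type) (xi : convergence X) : forall F G x, is_filter F -> is_filter G ->
      filter_le F G -> Epi_lim xi F x -> Epi_lim xi G x.
Proof.
  intros F G x HF HG HFG [th [H1 H2]]; exists th; split; auto.
  apply (lim_isotone th) with F; auto.
Qed.

Lemma Epi_centered (X : Type) (xi : convergence X) : forall x, Epi_lim xi (principal x) x.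
Proof.
  intro x; exists xi; split.
  - intros Y tau _; split; intros F p _ H; exact H.
  - apply lim_centered.
Qed.

Definition Epi_I1 (X : Type) (xi : convergence X) : convergence X :=
  @Convergence _ (Epi_lim xi) (@Epi_isotone _ xi) (@Epi_centered _ xi).

Definition countable_S0_character (X : Type) (xi : convergence X) : Prop :=
  exists sigma : convergence X,
    pretopology sigma /\ countable_character sigma /\
    conv_ge sigma xi /\ conv_ge xi (T sigma).

Definition strongly_countably_S0_characterized (X : Type) (xi : convergence X) : Prop :=
  exists sigma : convergence X,
    pretopology sigma /\ countable_character sigma /\
    conv_ge sigma xi /\ conv_ge xi (Epi_I1 sigma).

(* For a pretopology [sigma] of countable character and a Hausdorff [xi]
   coarser than [sigma], the inequality [xi >= Epi_I1 sigma] is equivalent to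
   a sequential condition: a [xi]-convergent filter with limit [x] contains a
   member of every increasing sequence [D] of sets whose union contains [x]
   and in which every point of the union has some [D n] as a [sigma]-vicinity.
   The condition suffices because, in a product with a convergence of
   countable character, an open set cut along a decreasing base of the second
   factor is such a sequence.  It is necessary because of a metric test space
   with one non-isolated point and one isolated point for each (n, D, z): over
   it, [D] yields a set that is open for every convergence finer than [xi]
   times the test space.  The same test space gives (3) => (1), and
   the condition passes to products with pretopologies of countable character,
   which gives (1) => (2). *)

From Stdlib Require Import Reals Classical ClassicalEpsilon Lia Lra Cantor.

Set Implicit Arguments.
Unset Strict Implicit.
Open Scope R_scope.

Lemma filter_true X (F : set X -> Prop) : is_filter F -> F (fun _ => True).
Proof. intros [h _]; exact h. Qed.

Lemma filter_and X (F : set X -> Prop) A B :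
  is_filter F -> F A -> F B -> F (fun x => A x /\ B x).
Proof. intros [_ [h _]]; apply h. Qed.

Lemma filter_up X (F : set X -> Prop) (A B : set X) :
  is_filter F -> F A -> (forall x, A x -> B x) -> F B.
Proof. intros [_ [_ [h _]]]; apply h. Qed.

Lemma filter_proper X (F : set X -> Prop) : is_filter F -> ~ F (fun _ => False).
Proof. intros [_ [_ [_ h]]]; exact h. Qed.

Lemma filter_nonempty X (F : set X -> Prop) A : is_filter F -> F A -> exists x, A x.
Proof.
  intros HF HA. apply NNPP; intro Hn.
  apply (filter_proper HF), filter_up with A; auto.
  intros x Ax; apply Hn; exists x; exact Ax.
Qed.

Lemma vicinity_filter X (xi : convergence X) x : is_filter (vicinity xi x).
Proof.
  split; [|split; [|split]].
  - intros F HF _; apply filter_true, HF.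
  - intros A B HA HB F HF Hl; apply filter_and; [exact HF | apply HA | apply HB]; auto.
  - intros A B HA HAB F HF Hl; apply filter_up with A; [exact HF | apply HA | ]; auto.
  - intro H; exact (H (principal x) (principal_filter x) (lim_centered xi x)).
Qed.

Lemma vicinity_center X (xi : convergence X) x A : vicinity xi x A -> A x.
Proof. intro H; exact (H (principal x) (principal_filter x) (lim_centered xi x)). Qed.

Definition filter_prod X Y (F : set X -> Prop) (G : set Y -> Prop) : set (X * Y) -> Prop :=
  fun S => exists A B, F A /\ G B /\ forall p, A (fst p) -> B (snd p) -> S p.

Lemma filter_prod_filter X Y (F : set X -> Prop) (G : set Y -> Prop) :
  is_filter F -> is_filter G -> is_filter (filter_prod F G).
Proof.
  intros HF HG; split; [|split; [|split]].
  - exists (fun _ => True), (fun _ => True).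
    split; [apply filter_true, HF|]; split; [apply filter_true, HG|]; auto.
  - intros S1 S2 [A1 [B1 [HA1 [HB1 H1]]]] [A2 [B2 [HA2 [HB2 H2]]]].
    exists (fun x => A1 x /\ A2 x), (fun y => B1 y /\ B2 y).
    split; [apply filter_and; auto|]; split; [apply filter_and; auto|].
    intros p [a1 a2] [b1 b2]; split; auto.
  - intros S1 S2 [A [B [HA [HB H]]]] Hsub; exists A, B; auto.
  - intros [A [B [HA [HB H]]]].
    destruct (filter_nonempty HF HA) as [a Ha], (filter_nonempty HG HB) as [b Hb].
    exact (H (a, b) Ha Hb).
Qed.

Lemma lim_filter_prod X Y (a : convergence X) (b : convergence Y) F G x y :
  is_filter F -> is_filter G -> lim a F x -> lim b G y ->
  lim (prod_conv a b) (filter_prod F G) (x, y).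
Proof.
  intros HF HG H1 H2; assert (HFG := filter_prod_filter HF HG); split; simpl.
  - apply (lim_isotone a) with F; auto; [apply image_is_filter, HFG|].
    intros A HA; exists A, (fun _ => True); split; [exact HA|].
    split; [apply filter_true, HG | auto].
  - apply (lim_isotone b) with G; auto; [apply image_is_filter, HFG|].
    intros B HB; exists (fun _ => True), B; split; [apply filter_true, HF|auto].
Qed.

Lemma filter_prod_le X Y (K : set (X * Y) -> Prop) F G : is_filter K ->
  filter_le F (image_filter fst K) -> filter_le G (image_filter snd K) ->
  filter_le (filter_prod F G) K.
Proof.
  intros HK H1 H2 S [A [B [HA [HB H]]]].
  apply filter_up with (fun p => A (fst p) /\ B (snd p)); auto.
  - apply filter_and; [exact HK | apply H1, HA | apply H2, HB].
  - intros p [Ap Bp]; auto.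
Qed.

Lemma vicinity_prod X Y (a : convergence X) (b : convergence Y) x y S :
  pretopology a -> pretopology b -> vicinity (prod_conv a b) (x, y) S ->
  filter_prod (vicinity a x) (vicinity b y) S.
Proof.
  intros Ha Hb Hv; apply Hv.
  - apply filter_prod_filter; apply vicinity_filter.
  - apply lim_filter_prod; auto; apply vicinity_filter.
Qed.

Lemma conv_ge_prod X Y (a b : convergence X) (c : convergence Y) :
  conv_ge a b -> conv_ge (prod_conv a c) (prod_conv b c).
Proof. intros Hab K p HK [H1 H2]; split; [apply Hab, H1; apply image_is_filter |]; auto. Qed.

Lemma hausdorff_ge X (a b : convergence X) : conv_ge a b -> hausdorff b -> hausdorff a.
Proof. intros Hab Hb F x y HF H1 H2; apply (Hb F); auto. Qed.

Lemma hausdorff_lim_neq X (xi : convergence X) F x z :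
  hausdorff xi -> is_filter F -> lim xi F x -> z <> x -> F (fun w => w <> z).
Proof.
  intros Hh HF Hl Hz; apply NNPP; intro Hn; apply Hz.
  apply (Hh (principal z)); [apply principal_filter | apply lim_centered |].
  apply (lim_isotone xi) with F; auto; [apply principal_filter|].
  intros A HA; apply NNPP; intro HAz.
  apply Hn, filter_up with A; auto; intros w Aw ->; contradiction.
Qed.

Lemma lim_T X (xi : convergence X) F x : is_filter F -> lim xi F x -> T_lim xi F x.
Proof. intros HF Hl O HO Ox; exact (HO F x HF Hl Ox). Qed.

Lemma conv_open_ge X (a b : convergence X) O :
  conv_ge a b -> conv_open b O -> conv_open a O.
Proof. intros Hab HO F x HF Hl; apply HO; auto. Qed.

Lemma T_ge_of_open X (a b : convergence X) :
  (forall O, conv_open a O -> conv_open b O) -> conv_ge (T b) (T a).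
Proof. intros Hab F x _ HT O HO; apply HT, Hab, HO. Qed.

Lemma conv_ge_T X (a b : convergence X) : conv_ge a b -> conv_ge (T a) (T b).
Proof. intro Hab; apply T_ge_of_open; intro O; apply conv_open_ge, Hab. Qed.

Lemma conv_open_fst X Y (a : convergence X) (b : convergence Y) O :
  conv_open a O -> conv_open (prod_conv a b) (fun q => O (fst q)).
Proof. intros HO K p HK [H1 _]; exact (HO _ _ (image_is_filter fst HK) H1). Qed.

Lemma conv_open_prod_mem X Y (a : convergence X) (b : convergence Y) O F G x y :
  conv_open (prod_conv a b) O -> O (x, y) -> is_filter F -> is_filter G ->
  lim a F x -> lim b G y -> filter_prod F G O.
Proof.
  intros HO Oxy HF HG H1 H2.
  exact (HO _ _ (filter_prod_filter HF HG) (lim_filter_prod HF HG H1 H2) Oxy).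
Qed.

(** * Countable character *)

Lemma countably_based_nested X (H : set X -> Prop) : is_filter H -> countably_based H ->
  exists E : nat -> set X, (forall n, H (E n)) /\
    (forall m n x, (m <= n)%nat -> E n x -> E m x) /\
    (forall A, H A -> exists n, forall x, E n x -> A x).
Proof.
  intros HH [B HB].
  assert (HBn : forall n, H (B n)) by (intro n; apply HB; exists n; auto).
  exists (fun n x => forall k, (k <= n)%nat -> B k x); split; [|split].
  - induction n as [|n IH].
    + apply filter_up with (B 0%nat); auto.
      intros x Hx k Hk; replace k with 0%nat by lia; exact Hx.
    + apply filter_up with (fun x => (forall k, (k <= n)%nat -> B k x) /\ B (S n) x).
      * exact HH.
      * apply filter_and; auto.
      * intros x [Hx HSn] k Hk.
        destruct (Nat.eq_dec k (S n)) as [->|Hne]; [exact HSn | apply Hx; lia].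
  - intros m n x Hmn Hx k Hk; apply Hx; lia.
  - intros A HA; destruct (proj1 (HB A) HA) as [n Hn].
    exists n; intros x Hx; apply Hn, Hx; lia.
Qed.

Lemma countably_based_image X Y (f : X -> Y) (H : set X -> Prop) :
  countably_based H -> countably_based (image_filter f H).
Proof.
  intros [B HB]; exists (fun n y => exists q, B n q /\ f q = y); intro A; split.
  - intro HA; destruct (proj1 (HB _) HA) as [n Hn].
    exists n; intros y [q [Hq <-]]; auto.
  - intros [n Hn]; apply HB; exists n; intros q Hq; apply Hn; exists q; auto.
Qed.

Lemma countably_based_vicinity X (xi : convergence X) x :
  pretopology xi -> countable_character xi -> countably_based (vicinity xi x).
Proof.
  intros Hp [Hc _].
  destruct (Hc _ _ (vicinity_filter xi x) (Hp x)) as [H [HH [[B HB] [Hle Hl]]]].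
  exists B; intro A; split.
  - intro HA; apply HB, HA; [exact HH | exact Hl].
  - intro Hn; apply Hle, HB, Hn.
Qed.

Lemma I1_ge X (xi : convergence X) : conv_ge (I1 xi) xi.
Proof. intros F x HF [H [HH [_ [Hle Hl]]]]; apply (lim_isotone xi) with H; auto. Qed.

Lemma pretopology_prod X Y (a : convergence X) (b : convergence Y) :
  pretopology a -> pretopology b -> pretopology (prod_conv a b).
Proof.
  intros Ha Hb [x y]; split; simpl.
  - apply (lim_isotone a) with (vicinity a x);
      [apply vicinity_filter | apply image_is_filter, vicinity_filter | | apply Ha].
    intros A HA K HK [H1 _]; exact (HA _ (image_is_filter fst HK) H1).
  - apply (lim_isotone b) with (vicinity b y);
      [apply vicinity_filter | apply image_is_filter, vicinity_filter | | apply Hb].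
    intros B HB K HK [_ H2]; exact (HB _ (image_is_filter snd HK) H2).
Qed.

Lemma countable_character_prod X Y (a : convergence X) (b : convergence Y) :
  countable_character a -> countable_character b -> countable_character (prod_conv a b).
Proof.
  intros [Ha _] [Hb _]; split; [|apply I1_ge].
  intros K [x y] HK [H1 H2].
  destruct (Ha _ _ (image_is_filter fst HK) H1) as [F [HF [[B HB] [HFle HFl]]]].
  destruct (Hb _ _ (image_is_filter snd HK) H2) as [G [HG [[C HC] [HGle HGl]]]].
  exists (filter_prod F G); split; [apply filter_prod_filter; auto|].
  split; [|split; [apply filter_prod_le; auto | apply lim_filter_prod; auto]].
  exists (fun k q => B (fst (of_nat k)) (fst q) /\ C (snd (of_nat k)) (snd q)).
  intro S; split.
  - intros [A1 [A2 [HA1 [HA2 Hs]]]].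
    destruct (proj1 (HB A1) HA1) as [n Hn], (proj1 (HC A2) HA2) as [m Hm].
    exists (to_nat (n, m)); rewrite cancel_of_to; intros q [q1 q2]; apply Hs; auto.
  - intros [k Hk]; exists (B (fst (of_nat k))), (C (snd (of_nat k))).
    split; [apply HB; eauto|]; split; [apply HC; eauto|].
    intros q q1 q2; apply Hk; auto.
Qed.

(** * Metric convergences *)

Definition inv_succ (n : nat) : R := / (INR n + 1).

Lemma inv_succ_pos n : 0 < inv_succ n.
Proof. apply Rinv_0_lt_compat; pose proof (pos_INR n); lra. Qed.

Lemma inv_succ_le m n : (m <= n)%nat -> inv_succ n <= inv_succ m.
Proof.
  intro Hmn; apply Rinv_le_contravar; [pose proof (pos_INR m); lra|].
  apply le_INR in Hmn; lra.
Qed.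

Lemma inv_succ_lt_S n : inv_succ (S n) < inv_succ n.
Proof.
  unfold inv_succ; rewrite S_INR; pose proof (pos_INR n).
  apply Rinv_lt_contravar; nra.
Qed.

Lemma inv_succ_lt_inv m n : inv_succ n < inv_succ m -> (m < n)%nat.
Proof.
  intro H; destruct (Compare_dec.le_lt_dec n m) as [Hnm|Hmn]; auto.
  pose proof (inv_succ_le Hnm); lra.
Qed.

Lemma inv_succ_small eps : 0 < eps -> exists n, inv_succ n < eps.
Proof.
  intro He; destruct (INR_unbounded (/ eps)) as [n Hn]; exists n.
  unfold inv_succ; rewrite <- (Rinv_inv eps); pose proof (pos_INR n).
  apply Rinv_lt_contravar; [apply Rmult_lt_0_compat; [apply Rinv_0_lt_compat|]|]; lra.
Qed.

Definition ball_filter Y (d : Y -> Y -> R) (y : Y) : set Y -> Prop :=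
  fun S => exists n, forall z, ball d y (inv_succ n) z -> S z.

Lemma ball_filter_filter Y (d : Y -> Y -> R) y : d y y = 0 -> is_filter (ball_filter d y).
Proof.
  intro Hyy; split; [|split; [|split]].
  - exists 0%nat; auto.
  - intros A B [n Hn] [m Hm]; exists (max n m); intros z Hz; unfold ball in Hz; split.
    + apply Hn; pose proof (inv_succ_le (Nat.le_max_l n m)); unfold ball; lra.
    + apply Hm; pose proof (inv_succ_le (Nat.le_max_r n m)); unfold ball; lra.
  - intros A B [n Hn] HAB; exists n; auto.
  - intros [n Hn]; apply (Hn y); unfold ball; rewrite Hyy; apply inv_succ_pos.
Qed.

Lemma ball_filter_ball Y (d : Y -> Y -> R) y eps : 0 < eps -> ball_filter d y (ball d y eps).
Proof.
  intro He; destruct (inv_succ_small He) as [n Hn]; exists n.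
  unfold ball; intros z Hz; lra.
Qed.

Lemma metrizable_pretopology Y (tau : convergence Y) :
  metrizable_topology tau -> pretopology tau.
Proof.
  intros [d [_ Hd]] y; apply Hd; [apply vicinity_filter|].
  intros eps He F HF Hl; apply Hd; auto.
Qed.

Lemma metrizable_countable_character Y (tau : convergence Y) :
  metrizable_topology tau -> countable_character tau.
Proof.
  intros [d [[_ [Hd0 _]] Hd]]; split; [|apply I1_ge].
  intros F y HF Hl.
  assert (HB : is_filter (ball_filter d y)) by (apply ball_filter_filter, Hd0; reflexivity).
  exists (ball_filter d y); split; [exact HB|]; split; [|split].
  - exists (fun n => ball d y (inv_succ n)); intro A; reflexivity.
  - intros S [n Hn]; apply filter_up with (ball d y (inv_succ n)); auto.
    apply (proj1 (Hd F y HF) Hl), inv_succ_pos.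
  - apply Hd; [exact HB|]; intros eps He; apply ball_filter_ball, He.
Qed.

Definition metric_lim Y (d : Y -> Y -> R) (F : set Y -> Prop) (y : Y) : Prop :=
  forall eps, 0 < eps -> F (ball d y eps).

Lemma metric_lim_isotone Y (d : Y -> Y -> R) : forall F G y, is_filter F -> is_filter G ->
  filter_le F G -> metric_lim d F y -> metric_lim d G y.
Proof. intros F G y _ _ HFG Hl eps He; apply HFG, Hl, He. Qed.

Lemma metric_lim_centered Y (d : Y -> Y -> R) :
  (forall y, d y y = 0) -> forall y, metric_lim d (principal y) y.
Proof. intros Hd y eps He; unfold principal, ball; rewrite Hd; exact He. Qed.

Definition metric_conv Y (d : Y -> Y -> R) (Hd : forall y, d y y = 0) : convergence Y :=
  @Convergence _ (metric_lim d) (@metric_lim_isotone _ d) (metric_lim_centered Hd).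
Arguments metric_conv {Y} d Hd.

Lemma metric_conv_metrizable Y (d : Y -> Y -> R) Hd :
  is_metric d -> metrizable_topology (metric_conv d Hd).
Proof. intro Hm; exists d; split; [exact Hm | reflexivity]. Qed.

Lemma lim_ball_filter Y (d : Y -> Y -> R) Hd y : lim (metric_conv d Hd) (ball_filter d y) y.
Proof. intros eps He; apply ball_filter_ball, He. Qed.

(** * The test space *)

(* A metric fan: the point [None] is the only non-isolated point, and
   [Some (m, D, z)] is at distance [inv_succ m] from it. *)
Definition test_space X := option (nat * (nat -> set X) * X).

Definition test_weight X (y : test_space X) : R :=
  match y with None => 0 | Some (m, _, _) => inv_succ m end.

Definition test_dist X (a b : test_space X) : R :=
  if excluded_middle_informative (a = b) then 0 else test_weight a + test_weight b.

Lemma test_weight_nonneg X (y : test_space X) : 0 <= test_weight y.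
Proof. destruct y as [[[m D] z]|]; simpl; [left; apply inv_succ_pos | lra]. Qed.

Lemma test_weight_some_pos X (s : nat * (nat -> set X) * X) : 0 < test_weight (Some s).
Proof. destruct s as [[m D] z]; apply inv_succ_pos. Qed.

Lemma test_dist_refl X (a : test_space X) : test_dist a a = 0.
Proof. unfold test_dist; destruct (excluded_middle_informative (a = a)); congruence. Qed.

Lemma test_dist_neq X (a b : test_space X) : a <> b -> test_dist a b = test_weight a + test_weight b.
Proof. intro Hab; unfold test_dist; destruct (excluded_middle_informative (a = b)); tauto. Qed.

Lemma test_dist_apex X m (D : nat -> set X) z : test_dist None (Some (m, D, z)) = inv_succ m.
Proof. rewrite test_dist_neq; [simpl; ring | discriminate]. Qed.

Lemma test_dist_metric X : is_metric (@test_dist X).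
Proof.
  assert (Hpos : forall a b : test_space X, a <> b -> 0 < test_weight a + test_weight b).
  { intros [s|] [t|] Hab.
    - pose proof (test_weight_some_pos s); pose proof (test_weight_some_pos t); lra.
    - change (0 < test_weight (Some s) + 0); pose proof (test_weight_some_pos s); lra.
    - change (0 < 0 + test_weight (Some t)); pose proof (test_weight_some_pos t); lra.
    - congruence. }
  split; [|split; [|split]].
  - intros a b; destruct (classic (a = b)) as [<-|Hab]; [rewrite test_dist_refl; lra|].
    rewrite test_dist_neq; auto; left; apply Hpos, Hab.
  - intros a b; split; [|intros <-; apply test_dist_refl].
    intro H; apply NNPP; intro Hab; rewrite test_dist_neq in H; auto.
    pose proof (Hpos a b Hab); lra.
  - intros a b; destruct (classic (a = b)) as [<-|Hab]; [reflexivity|].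
    rewrite !test_dist_neq; auto; lra.
  - intros a b c; pose proof (test_weight_nonneg a); pose proof (test_weight_nonneg b).
    pose proof (test_weight_nonneg c).
    destruct (classic (a = c)) as [<-|Hac].
    + rewrite test_dist_refl; destruct (classic (a = b)) as [<-|Hab];
        [rewrite test_dist_refl; lra | rewrite !test_dist_neq; auto; lra].
    + destruct (classic (a = b)) as [<-|Hab]; [rewrite test_dist_refl; lra|].
      destruct (classic (b = c)) as [<-|Hbc]; [rewrite test_dist_refl; lra|].
      rewrite !test_dist_neq; auto; lra.
Qed.

Definition test_conv X : convergence (test_space X) :=
  metric_conv (@test_dist X) (@test_dist_refl X).

Lemma test_conv_metrizable X : metrizable_topology (test_conv X).
Proof. apply metric_conv_metrizable, test_dist_metric. Qed.

Lemma test_conv_countable_character X : countable_character (test_conv X).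
Proof. apply metrizable_countable_character, test_conv_metrizable. Qed.

Lemma test_conv_pretopology X : pretopology (test_conv X).
Proof. apply metrizable_pretopology, test_conv_metrizable. Qed.

Definition apex_filter X : set (test_space X) -> Prop := ball_filter (@test_dist X) None.
Arguments apex_filter X : clear implicits.

Lemma apex_filter_filter X : is_filter (apex_filter X).
Proof. apply ball_filter_filter, test_dist_refl. Qed.

Lemma lim_apex_filter X : lim (test_conv X) (apex_filter X) None.
Proof. apply lim_ball_filter. Qed.

Lemma lim_test_conv_some X (s : nat * (nat -> set X) * X) K :
  is_filter K -> lim (test_conv X) K (Some s) -> K (fun y => y = Some s).
Proof.
  intros HK Hl; apply filter_up with (ball (@test_dist X) (Some s) (test_weight (Some s))); auto.
  - apply Hl, test_weight_some_pos.
  - intros b Hb; apply NNPP; intro Hbs; unfold ball in Hb.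
    rewrite test_dist_neq in Hb; [|congruence].
    pose proof (test_weight_nonneg b); lra.
Qed.

Lemma test_conv_prime X : prime (test_conv X).
Proof.
  assert (Hiso : forall s, isolated (test_conv X) (Some s)).
  { intros s F HF Hl A; pose proof (lim_test_conv_some HF Hl) as Hs; unfold principal; split.
    - intro HA; apply NNPP; intro HAs; apply (filter_proper HF).
      apply filter_up with (fun y => A y /\ y = Some s); [exact HF | apply filter_and; auto |].
      intros y [Ay ->]; contradiction.
    - intro HA; apply filter_up with (fun y => y = Some s); auto; intros y ->; exact HA. }
  intros [s|] [t|] Ha Hb; try (exfalso; apply Ha, Hiso); try (exfalso; apply Hb, Hiso).
  reflexivity.
Qed.

(** * Open chains *)

Definition open_chain X (sigma : convergence X) (D : nat -> set X) : Prop :=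
  (forall n z, D n z -> D (S n) z) /\
  (forall n z, D n z -> exists k, vicinity sigma z (D k)).

Definition chain_lim X (sigma : convergence X) (F : set X -> Prop) (x : X) : Prop :=
  forall D, open_chain sigma D -> forall n, D n x -> exists k, F (D k).

Lemma increasing_le X (D : nat -> set X) : (forall n z, D n z -> D (S n) z) ->
  forall m n z, (m <= n)%nat -> D m z -> D n z.
Proof. intros HD m n z Hmn; induction Hmn; auto. Qed.

Lemma conv_open_prod_of_chain_lim X Y (sigma theta : convergence X) (rho : convergence Y) O :
  pretopology sigma -> countable_character rho ->
  (forall F x, is_filter F -> lim theta F x -> chain_lim sigma F x) ->
  conv_open (prod_conv sigma rho) O -> conv_open (prod_conv theta rho) O.
Proof.
  intros Hs [Hrho _] Hth HO K [x y] HK [H1 H2] Oxy; simpl in H1, H2.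
  destruct (Hrho _ _ (image_is_filter snd HK) H2) as [H [HH [Hcb [Hle Hl]]]].
  destruct (countably_based_nested HH Hcb) as [E [HE [Enest Ebase]]].
  set (D := fun n x' => O (x', y) /\ forall y', E n y' -> O (x', y')).
  assert (Hsect : forall z, O (z, y) -> exists k, vicinity sigma z (D k)).
  { intros z Oz.
    destruct (conv_open_prod_mem HO Oz (vicinity_filter sigma z) HH (Hs z) Hl)
      as [A [B [HA [HB Hsub]]]].
    destruct (conv_open_prod_mem HO Oz (vicinity_filter sigma z) (principal_filter y)
      (Hs z) (lim_centered rho y)) as [A' [B' [HA' [HB' Hsub']]]].
    destruct (Ebase B HB) as [k Hk]; exists k.
    apply filter_up with (fun w => A w /\ A' w); [apply vicinity_filter | |].
    - apply filter_and; auto; apply vicinity_filter.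
    - intros w [Aw A'w]; split; [apply (Hsub' (w, y)); auto|].
      intros y' Ey'; apply (Hsub (w, y')); auto. }
  assert (Hchain : open_chain sigma D).
  { split.
    - intros n z [Oz Hz]; split; [exact Oz|]; intros y' Ey'; apply Hz, Enest with (S n); auto.
    - intros n z [Oz _]; apply Hsect, Oz. }
  destruct (Hsect x Oxy) as [k0 Hk0].
  destruct (Hth _ _ (image_is_filter fst HK) H1 D Hchain k0 (vicinity_center Hk0)) as [n Hn].
  apply filter_up with (fun p => D n (fst p) /\ E n (snd p)); [exact HK | |].
  - apply filter_and; [exact HK | exact Hn | exact (Hle _ (HE n))].
  - intros [x' y'] [[_ Hd] He]; exact (Hd y' He).
Qed.

Lemma epi_class_of_chain_lim X (sigma theta : convergence X) :
  pretopology sigma -> conv_ge sigma theta ->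
  (forall F x, is_filter F -> lim theta F x -> chain_lim sigma F x) ->
  epi_class sigma theta.
Proof.
  intros Hs Hge Hth Y rho Hrho; split.
  - apply conv_ge_T, conv_ge_prod, Hge.
  - apply T_ge_of_open; intro O; apply conv_open_prod_of_chain_lim; auto.
Qed.

Lemma chain_lim_prod X Y (sigma xi : convergence X) (tau : convergence Y) :
  pretopology sigma -> pretopology tau -> countable_character tau ->
  (forall F x, is_filter F -> lim xi F x -> chain_lim sigma F x) ->
  forall K p, is_filter K -> lim (prod_conv xi tau) K p -> chain_lim (prod_conv sigma tau) K p.
Proof.
  intros Hs Ht Hcc Hxi K [x y] HK [H1 H2] D [Hmono Hvic] n0 Hxy; simpl in H1, H2.
  destruct (countably_based_nested (vicinity_filter tau y) (countably_based_vicinity y Ht Hcc))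
    as [E [HE [Enest Ebase]]].
  set (D' := fun n x' => forall y', E n y' -> D n (x', y')).
  assert (Hsect : forall z m, vicinity (prod_conv sigma tau) (z, y) (D m) ->
                    exists j, vicinity sigma z (D' j)).
  { intros z m Hv; destruct (vicinity_prod Hs Ht Hv) as [A [B [HA [HB Hsub]]]].
    destruct (Ebase B HB) as [k Hk]; exists (max m k).
    apply filter_up with A; [apply vicinity_filter | exact HA |].
    intros x' Ax' y' Ey'; apply (increasing_le Hmono) with m; [lia|].
    apply (Hsub (x', y')); auto; apply Hk, Enest with (max m k); [lia | exact Ey']. }
  assert (Hchain : open_chain sigma D').
  { split.
    - intros n z Hz y' Ey'; apply Hmono, Hz, Enest with (S n); auto.
    - intros n z Hz; destruct (Hvic n (z, y) (Hz y (vicinity_center (HE n)))) as [m Hm].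
      exact (Hsect z m Hm). }
  destruct (Hvic _ _ Hxy) as [m Hm]; destruct (Hsect x m Hm) as [j Hj].
  destruct (Hxi _ _ (image_is_filter fst HK) H1 D' Hchain j (vicinity_center Hj)) as [k Hk].
  exists k; apply filter_up with (fun p => D' k (fst p) /\ E k (snd p)); [exact HK | |].
  - apply filter_and; [exact HK | exact Hk | exact (HE k _ (image_is_filter snd HK) H2)].
  - intros [x' y'] [Hd He]; exact (Hd y' He).
Qed.

(* Over [Some (m, D, z)] the set contains only the fibre point [z], and only
   when [D m z]; this forces a product filter containing it to contain some
   [D n] in its first factor. *)
Definition chain_test_set X (D : nat -> set X) : set (X * test_space X) := fun q =>
  match snd q with
  | None => exists n, D n (fst q)
  | Some (m, D', z) => D' = D -> fst q = z -> D m z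
  end.

Lemma chain_test_set_open X (xi sigma : convergence X) (kappa : convergence (X * test_space X)) D :
  hausdorff xi -> conv_ge kappa (prod_conv xi (test_conv X)) ->
  (forall K z, is_filter K -> lim kappa K (z, None) -> lim sigma (image_filter fst K) z) ->
  open_chain sigma D -> conv_open kappa (chain_test_set D).
Proof.
  intros Hxi Hkappa Hvs [Hmono Hvic] K [x [[[m D'] z]|]] HK Hl Ho;
    destruct (Hkappa _ _ HK Hl) as [H1 H2]; simpl in H1, H2; unfold chain_test_set in Ho; simpl in Ho.
  - pose proof (lim_test_conv_some (image_is_filter snd HK) H2) as Hs.
    destruct (classic (D' = D /\ ~ D m z)) as [[HD HnD] | Hn].
    + assert (Hzx : z <> x) by (intros ->; apply HnD, Ho; auto).
      pose proof (hausdorff_lim_neq Hxi (image_is_filter fst HK) H1 Hzx) as Hz.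
      apply filter_up with (fun q => snd q = Some (m, D', z) /\ fst q <> z);
        [exact HK | apply filter_and; auto |].
      intros [x' y'] [Hy Hx]; simpl in *; subst y'; unfold chain_test_set; simpl.
      intros _ ->; contradiction.
    + apply filter_up with (fun q => snd q = Some (m, D', z)); auto.
      intros [x' y'] Hy; simpl in Hy; subst y'; unfold chain_test_set; simpl.
      intros HD _; apply NNPP; intro HnD; apply Hn; auto.
  - destruct Ho as [n Hn]; destruct (Hvic n x Hn) as [k Hk].
    pose proof (Hk _ (image_is_filter fst HK) (Hvs K x HK Hl)) as HDk.
    pose proof (H2 _ (inv_succ_pos k)) as Hball.
    apply filter_up with (fun q => D k (fst q) /\ ball (@test_dist X) None (inv_succ k) (snd q));
      [exact HK | apply filter_and; auto |].
    intros [x' [[[m' D''] z']|]] [Hd Hb]; simpl in *; unfold chain_test_set; simpl.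
    + intros -> ->; unfold ball in Hb; rewrite test_dist_apex in Hb.
      apply (increasing_le Hmono) with k; [apply Nat.lt_le_incl, inv_succ_lt_inv, Hb | exact Hd].
    + exists k; exact Hd.
Qed.

Lemma chain_test_set_extract X (F : set X -> Prop) D : is_filter F ->
  filter_prod F (apex_filter X) (chain_test_set D) -> exists n, F (D n).
Proof.
  intros HF [A [B [HA [[n Hn] Hsub]]]]; exists (S n).
  apply filter_up with A; auto; intros z Hz.
  assert (HB : B (Some (S n, D, z))).
  { apply Hn; unfold ball; rewrite test_dist_apex; apply inv_succ_lt_S. }
  exact (Hsub (z, Some (S n, D, z)) Hz HB eq_refl eq_refl).
Qed.

Lemma chain_lim_of_test X (xi sigma : convergence X) (kappa : convergence (X * test_space X)) F x :
  hausdorff xi -> conv_ge kappa (prod_conv xi (test_conv X)) ->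
  (forall K z, is_filter K -> lim kappa K (z, None) -> lim sigma (image_filter fst K) z) ->
  is_filter F -> T_lim kappa (filter_prod F (apex_filter X)) (x, None) ->
  chain_lim sigma F x.
Proof.
  intros Hxi Hk Hvs HF HT D Hch n Hn.
  apply chain_test_set_extract; [exact HF|].
  apply HT; [exact (chain_test_set_open Hxi Hk Hvs Hch) | exists n; exact Hn].
Qed.

Lemma Epi_I1_ge_T X (sigma : convergence X) : conv_ge (Epi_I1 sigma) (T sigma).
Proof.
  intros F x HF [theta [Hth Hl]] O HO Ox.
  destruct (Hth _ _ (test_conv_countable_character X)) as [_ HT].
  set (K := image_filter (fun z => (z, None : test_space X)) F).
  assert (HK : is_filter K) by (apply image_is_filter, HF).
  assert (Hlim : lim (prod_conv theta (test_conv X)) K (x, None)).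
  { split; [exact Hl|]; intros eps He.
    change (F (fun _ => ball (@test_dist X) None eps None)).
    apply filter_up with (fun _ => True); [exact HF | apply filter_true, HF |].
    intros _ _; unfold ball; rewrite test_dist_refl; exact He. }
  exact (HT K (x, None) HK (lim_T HK Hlim) _ (conv_open_fst HO) Ox).
Qed.

Lemma chain_lim_of_Epi_I1_le X (sigma xi : convergence X) F x :
  hausdorff sigma -> conv_ge xi (Epi_I1 sigma) -> is_filter F -> lim xi F x ->
  chain_lim sigma F x.
Proof.
  intros Hh Hxe HF Hl; destruct (Hxe F x HF Hl) as [theta [Hth Hlt]].
  destruct (Hth _ _ (test_conv_countable_character X)) as [_ HT].
  apply chain_lim_of_test with sigma (prod_conv sigma (test_conv X)); auto.
  - intros K p _ Hp; exact Hp.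
  - intros K z _ [H1 _]; exact H1.
  - assert (HFA := filter_prod_filter HF (apex_filter_filter X)).
    apply HT, lim_T; [exact HFA | exact HFA |].
    exact (lim_filter_prod HF (apex_filter_filter X) Hlt (lim_apex_filter X)).
Qed.

Lemma Epi_I1_le_of_chain_lim X (sigma xi : convergence X) :
  pretopology sigma -> conv_ge sigma xi ->
  (forall F x, is_filter F -> lim xi F x -> chain_lim sigma F x) ->
  conv_ge xi (Epi_I1 sigma).
Proof.
  intros Hs Hsx Hch F x HF Hl; exists xi; split; [|exact Hl].
  apply epi_class_of_chain_lim; auto.
Qed.

(** * Pretopologies with prescribed vicinity filters *)

Definition pretop_lim X (V : X -> set X -> Prop) (F : set X -> Prop) (x : X) : Prop :=
  filter_le (V x) F.

Lemma pretop_lim_isotone X (V : X -> set X -> Prop) : forall F G x,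
  is_filter F -> is_filter G -> filter_le F G -> pretop_lim V F x -> pretop_lim V G x.
Proof. intros F G x _ _ HFG Hl A HA; apply HFG, Hl, HA. Qed.

Lemma pretop_lim_centered X (V : X -> set X -> Prop) :
  (forall x A, V x A -> A x) -> forall x, pretop_lim V (principal x) x.
Proof. intros HV x A HA; exact (HV x A HA). Qed.

Definition pretop_conv X (V : X -> set X -> Prop) (HV : forall x A, V x A -> A x) : convergence X :=
  @Convergence _ (pretop_lim V) (@pretop_lim_isotone X V) (pretop_lim_centered HV).
Arguments pretop_conv {X} V HV.

Lemma pretop_conv_pretopology X V HV : pretopology (@pretop_conv X V HV).
Proof. intros x A HA F HF Hl; apply Hl, HA. Qed.

Lemma pretop_conv_countable_character X V HV :
  (forall x, is_filter (V x)) -> (forall x, countably_based (V x)) ->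
  countable_character (@pretop_conv X V HV).
Proof.
  intros Vf Vcb; split; [|apply I1_ge].
  intros F x HF Hl; exists (V x).
  split; [exact (Vf x)|]; split; [exact (Vcb x)|]; split; [exact Hl|].
  intros A HA; exact HA.
Qed.

Lemma strongly_S0_prod X Y (xi : convergence X) (tau : convergence Y) :
  hausdorff xi -> pretopology tau -> countable_character tau ->
  strongly_countably_S0_characterized xi ->
  strongly_countably_S0_characterized (prod_conv xi tau).
Proof.
  intros Hh Htp Htc [sigma [Hsp [Hsc [Hsx Hxe]]]].
  assert (Hge : conv_ge (prod_conv sigma tau) (prod_conv xi tau)) by (apply conv_ge_prod, Hsx).
  assert (Hpre : pretopology (prod_conv sigma tau)) by (apply pretopology_prod; auto).
  exists (prod_conv sigma tau); split; [exact Hpre|].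
  split; [apply countable_character_prod; auto|]; split; [exact Hge|].
  apply Epi_I1_le_of_chain_lim; auto.
  apply chain_lim_prod; auto; intros F x HF Hl.
  apply chain_lim_of_Epi_I1_le with xi; auto; apply hausdorff_ge with xi; auto.
Qed.

Lemma countable_S0_of_strongly X (xi : convergence X) :
  strongly_countably_S0_characterized xi -> countable_S0_character xi.
Proof.
  intros [sigma [Hsp [Hsc [Hsx Hxe]]]]; exists sigma.
  split; [exact Hsp|]; split; [exact Hsc|]; split; [exact Hsx|].
  intros F x HF Hl; apply Epi_I1_ge_T, Hxe; auto.
Qed.

Lemma strongly_S0_of_test X (xi : convergence X) :
  hausdorff xi -> countable_S0_character (prod_conv xi (test_conv X)) ->
  strongly_countably_S0_characterized xi.
Proof.
  intros Hh [k [Hkp [Hkc [Hkge Hkt]]]].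
  set (V := fun x => image_filter fst (vicinity k (x, None))).
  assert (HV : forall x A, V x A -> A x) by (intros x A HA; exact (vicinity_center HA)).
  assert (Vf : forall x, is_filter (V x)) by (intro x; apply image_is_filter, vicinity_filter).
  set (sigma := pretop_conv V HV).
  assert (Hsx : conv_ge sigma xi).
  { intros F x HF Hl; apply (lim_isotone xi) with (V x); auto.
    exact (proj1 (Hkge _ _ (vicinity_filter k (x, None)) (Hkp (x, None)))). }
  exists sigma; split; [apply pretop_conv_pretopology|].
  split; [apply pretop_conv_countable_character; auto|].
  { intro x; apply countably_based_image, countably_based_vicinity; auto. }
  split; [exact Hsx|].
  apply Epi_I1_le_of_chain_lim; [apply pretop_conv_pretopology | exact Hsx |].
  intros F x HF Hl; apply chain_lim_of_test with xi k; auto.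
  - intros K z HK Hlz A HA; exact (HA K HK Hlz).
  - apply Hkt; [exact (filter_prod_filter HF (apex_filter_filter X))|].
    exact (lim_filter_prod HF (apex_filter_filter X) Hl (lim_apex_filter X)).
Qed.

Theorem theorem5p5 (X : Type) (xi : convergence X) :
  hausdorff xi ->
  (strongly_countably_S0_characterized xi <->
     (forall (Y : Type) (tau : convergence Y),
        pretopology tau -> countable_character tau ->
        strongly_countably_S0_characterized (prod_conv xi tau))) /\
  (strongly_countably_S0_characterized xi <->
     (forall (Y : Type) (tau : convergence Y),
        prime tau -> metrizable_topology tau ->
        countable_S0_character (prod_conv xi tau))).
Proof.
  intro Hh; split; split.
  - intros H1 Y tau Htp Htc; exact (strongly_S0_prod Hh Htp Htc H1).
  - intro H2; apply strongly_S0_of_test; [exact Hh|].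
    apply countable_S0_of_strongly, H2;
      [apply test_conv_pretopology | apply test_conv_countable_character].
  - intros H1 Y tau _ Hm; apply countable_S0_of_strongly, strongly_S0_prod; auto;
      [apply metrizable_pretopology | apply metrizable_countable_character]; exact Hm.
  - intro H3; apply strongly_S0_of_test; [exact Hh|].
    apply H3; [apply test_conv_prime | apply test_conv_metrizable].
Qed.
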